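(* Let $D^1$ and $D^2$ be compatible POMDPs. A policy $\pi$ is Pareto optimal for the pair $(D^1,D^2)$ if and only if there exist weights $w^1,w^2\ge0$ with $w^1+w^2=1$ such that $\pi$ is an optimal policy (i.e. maximizes $\mathbb E[U;\pi]$ over all policies) for the single POMDP mixture $w^1D^1+w^2D^2$.
   Context: For $j\in\{1,2\}$, $D^j=(\mathcal S^j,\mathcal A,T^j,U^j,\mathcal O,\Omega^j,n)$ is a POMDP: finite state set $\mathcal S^j$, finite action set $\mathcal A$, finite observation set $\mathcal O$, $n$ time steps, initial distribution $\mathbb P^j(s_1)$, transitions $\mathbb P^j(s_{i+1}\mid s_i,a_i)$, observation probabilities $\mathbb P^j(o_i\mid s_i)$, utility $U^j:(\mathcal S^j)^n\to\mathbb R$. Compatible means same $\mathcal A$, $\mathcal O$, $n$. A policy $\pi=(\pi_1,\dots,\pi_n)$ gives distributions $\pi_i(\cdot\mid o_{\le i},a_{<i})$ on $\mathcal A$; $\mathbb P^j(\bar s,\bar o,\bar a;\pi)=\mathbb P^j(s_1)\prod_{i=1}^n\mathbb P^j(o_i\mid s_i)\pi_i(a_i\mid o_{\le i},a_{<i})\mathbb P^j(s_{i+1}\mid s_i,a_i)$ and $\mathbb E^j[U^j;\pi]=\sum_{\bar s}\mathbb P^j(\bar s;\pi)U^j(\bar s)$. The policy class is closed under mixtures: for policies $\pi_k$ and convex weights $\alpha_k$, $\sum_k\alpha_k\pi_k$ chooses once and for all before any input, with probability $\alpha_k$, to follow $\pi_k$, so that $\mathbb E^j[U^j;\sum_k\alpha_k\pi_k]=\sum_k\alpha_k\mathbb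 E^j[U^j;\pi_k]$. A policy $\pi$ is Pareto optimal for $(D^1,D^2)$ if for every policy $\pi'$, $\mathbb E^1[U^1;\pi]\ge\mathbb E^1[U^1;\pi']$ or $\mathbb E^2[U^2;\pi]\ge\mathbb E^2[U^2;\pi']$. The mixture $D=w^1D^1+w^2D^2$ is the POMDP with the same $\mathcal A,\mathcal O,n$, state set $\mathcal S=\{(j,s):j\in\{1,2\},s\in\mathcal S^j\}$, initial distribution $\mathbb P((j,s_1))=w^j\mathbb P^j(s_1)$, transitions $\mathbb P((j',s_{i+1})\mid(j,s_i),a_i)=\mathbb P^j(s_{i+1}\mid s_i,a_i)$ if $j'=j$ and $0$ otherwise (so $j$ is constant along a history), observation probabilities $\mathbb P(o_i\mid(j,s_i))=\mathbb P^j(o_i\mid s_i)$ (the policy does not observe $j$), and utility $U(j,\bar s)=U^j(\bar s)$. *)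

From HB Require Import structures.
From mathcomp Require Import all_boot all_order all_algebra.
From mathcomp Require Import reals.
Unset Printing Implicit Defensive.
Import Order.TTheory GRing.Theory Num.Theory.
Local Open Scope ring_scope.

(* A POMDP with action set A, observation set O and n time steps.
   States s_1..s_n are stored as an n.-tuple indexed 0..n-1. *)
Record pomdp (R : realType) (A O : finType) (n : nat) := Pomdp {
  st : finType;
  init : st -> R;
  trans : st -> A -> st -> R;     (* P(s_{i+1} | s_i, a_i) *)
  obs : st -> O -> R;
  util : n.-tuple st -> R
}.
Arguments Pomdp {R A O n}.
Arguments st {R A O n} p.
Arguments init {R A O n} p _.
Arguments trans {R A O n} p _ _ _.
Arguments obs {R A O n} p _ _.
Arguments util {R A O n} p _.

Definition valid_pomdp {R : realType} {A O : finType} {n : nat}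
    (D : pomdp R A O n) : Prop :=
  (forall s, 0 <= init D s) /\ \sum_s init D s = 1 /\
  (forall s a s', 0 <= trans D s a s') /\
  (forall s a, \sum_s' trans D s a s' = 1) /\
  (forall s o, 0 <= obs D s o) /\
  (forall s, \sum_o obs D s o = 1).

(* A behavioural policy: pi i (o_1..o_{i+1}) (a_1..a_i) a, for time index
   i = 0..n-1 (i.e. time step i+1). *)
Definition bpolicy (R : realType) (A O : finType) :=
  nat -> seq O -> seq A -> A -> R.

Definition valid_bpolicy {R : realType} {A O : finType} (p : bpolicy R A O) : Prop :=
  forall i os as_, (forall a, 0 <= p i os as_ a) /\ \sum_a p i os as_ a = 1.

(* The policy class: finite mixtures (chosen once and for all before any input)
   of behavioural policies; it contains behavioural policies (singletons) and is
   closed under mixtures. *)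
Definition policy (R : realType) (A O : finType) := seq (R * bpolicy R A O).

Definition valid_policy {R : realType} {A O : finType} (m : policy R A O) : Prop :=
  (forall i, (i < size m)%N ->
     0 <= (nth (0, fun _ _ _ _ => 0) m i).1 /\
     valid_bpolicy (nth (0, fun _ _ _ _ => 0) m i).2) /\
  \sum_(k <- m) k.1 = 1.

Definition trajP {R : realType} {A O : finType} {n : nat} (D : pomdp R A O n)
    (p : bpolicy R A O) (s : n.-tuple (st D)) (o : n.-tuple O) (a : n.-tuple A) : R :=
  (\prod_(i < n | i == 0 :> nat) init D (tnth s i)) *
  (\prod_(i < n) (obs D (tnth s i) (tnth o i) *
                  p i (take i.+1 o) (take i a) (tnth a i))) *
  (\prod_(i < n) \prod_(j < n | j == i.+1 :> nat)
       trans D (tnth s i) (tnth a i) (tnth s j)).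

Definition trajPm {R : realType} {A O : finType} {n : nat} (D : pomdp R A O n)
    (m : policy R A O) (s : n.-tuple (st D)) (o : n.-tuple O) (a : n.-tuple A) : R :=
  \sum_(k <- m) k.1 * trajP D k.2 s o a.

Definition EU {R : realType} {A O : finType} {n : nat} (D : pomdp R A O n)
    (m : policy R A O) : R :=
  \sum_(s : n.-tuple (st D))
     (\sum_(o : n.-tuple O) \sum_(a : n.-tuple A) trajPm D m s o a) * util D s.

Definition pareto_optimal {R : realType} {A O : finType} {n : nat}
    (D1 D2 : pomdp R A O n) (m : policy R A O) : Prop :=
  forall m', valid_policy m' -> EU D1 m' <= EU D1 m \/ EU D2 m' <= EU D2 m.

Definition optimal {R : realType} {A O : finType} {n : nat}
    (D : pomdp R A O n) (m : policy R A O) : Prop :=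
  forall m', valid_policy m' -> EU D m' <= EU D m.

(* The mixture w1 D1 + w2 D2; the state (j, s) is encoded as inl s (j = 1)
   or inr s (j = 2). *)
Definition mixture {R : realType} {A O : finType} {n : nat} (w1 w2 : R)
    (D1 D2 : pomdp R A O n) : pomdp R A O n :=
  @Pomdp R A O n (st D1 + st D2)%type
    (fun x => match x with inl s => w1 * init D1 s | inr s => w2 * init D2 s end)
    (fun x a y => match x, y with
                  | inl s, inl s' => trans D1 s a s'
                  | inr s, inr s' => trans D2 s a s'
                  | _, _ => 0 end)
    (fun x o => match x with inl s => obs D1 s o | inr s => obs D2 s o end)
    (fun t => \sum_(s1 : n.-tuple (st D1))
                 (if t == map_tuple inl s1 then util D1 s1 else 0)
            + \sum_(s2 : n.-tuple (st D2))
                 (if t == map_tuple inr s2 then util D2 s2 else 0)).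

From HB Require Import structures.
From mathcomp Require Import all_boot all_order all_algebra.
From mathcomp Require Import classical_sets reals.
From mathcomp Require Import ring lra.
Import Order.TTheory GRing.Theory Num.Theory.
Local Open Scope classical_set_scope.
Local Open Scope ring_scope.

(* Let G be the set of gains (EU D1 m - EU D1 pi, EU D2 m - EU D2 pi) over all
   valid policies m.  Mixing policies mixes expected utilities, so G is convex, and pi
   is Pareto optimal iff G misses the open positive quadrant.  A convex set of
   the plane missing that quadrant lies below a line through the origin with a
   normal (w, 1 - w), 0 <= w <= 1; as the expected utility in w1 D1 + w2 D2 is
   w1 EU1 + w2 EU2, this says that pi is optimal for the mixture with weights
   (w, 1 - w). *)

Lemma le_or_le_of_wsum_le (R : realDomainType) (w1 w2 x1 x2 y1 y2 : R) :
  0 <= w1 -> 0 <= w2 -> w1 + w2 = 1 ->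
  w1 * x1 + w2 * x2 <= w1 * y1 + w2 * y2 -> x1 <= y1 \/ x2 <= y2.
Proof.
move=> w1_ge0 w2_ge0 w12 le_wsum.
case: (lerP x1 y1) => [|lt1]; [by left | right].
rewrite leNgt; apply/negP => lt2.
have le2 : w2 * y2 <= w2 * x2 by rewrite ler_wpM2l // ltW.
have [w1_0|w1_gt0] := eqVneq w1 0.
  have w2_1 : w2 = 1 by lra.
  by move: le_wsum; rewrite w1_0 w2_1; lra.
have : w1 * y1 < w1 * x1 by rewrite ltr_pM2l // lt_neqAle eq_sym w1_gt0.
lra.
Qed.

Section QuadrantSeparation.
Context {R : realType} {C : R -> R -> Prop}.
Hypothesis C_convex : forall {x1 y1 x2 y2} (t : R), C x1 y1 -> C x2 y2 -> 0 <= t <= 1 ->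
  C (t * x1 + (1 - t) * x2) (t * y1 + (1 - t) * y2).
Hypothesis C_avoids_quadrant : forall {x y}, C x y -> x <= 0 \/ y <= 0.

(* Otherwise the segment from p to q crosses the diagonal inside the quadrant. *)
Lemma diagonal_sides_cross_le {p1 p2 q1 q2} : C p1 p2 -> C q1 q2 ->
  p1 < p2 -> q2 < q1 -> p2 * q1 <= p1 * q2.
Proof.
move=> Cp Cq ltp ltq; rewrite leNgt; apply/negP => lt_cross.
pose d := (q1 - q2) + (p2 - p1).
have d_gt0 : 0 < d by rewrite /d; lra.
set t := (q1 - q2) / d.
have t01 : 0 <= t <= 1.
  apply/andP; split; first by apply: divr_ge0; rewrite ?subr_ge0 ltW.
  by rewrite /t ler_pdivrMr // mul1r /d; lra.
have z1E : t * p1 + (1 - t) * q1 = (p2 * q1 - p1 * q2) / d.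
  by rewrite /t /d; field; rewrite gt_eqF.
have z2E : t * p2 + (1 - t) * q2 = (p2 * q1 - p1 * q2) / d.
  by rewrite /t /d; field; rewrite gt_eqF.
have z_gt0 : 0 < (p2 * q1 - p1 * q2) / d by rewrite divr_gt0 // subr_gt0.
have := C_avoids_quadrant (C_convex t Cp Cq t01); rewrite z1E z2E; lra.
Qed.

(* Each point above the diagonal bounds w from below, each point below it bounds
   w from above; w is the supremum of the lower bounds. *)
Lemma supporting_weight : exists2 w, 0 <= w <= 1 &
  forall x y, C x y -> w * x + (1 - w) * y <= 0.
Proof.
pose S : set R := fun w => w = 0 \/
  exists p1 p2, [/\ C p1 p2, p1 < p2 & w = p2 / (p2 - p1)].
have S0 : S 0 by left.
have S_le1 : ubound S 1.
  move=> _ [->|[p1 [p2 [Cp ltp ->]]]] //.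
  rewrite ler_pdivrMr ?subr_gt0 //; have := C_avoids_quadrant Cp; lra.
have S_ub : has_ubound S by exists 1.
have S_le_sup := ub_le_sup S_ub.
have sup_le1 : sup S <= 1 by apply: ge_sup => //; exists 0.
exists (sup S); first by apply/andP; split => //; exact: S_le_sup.
move=> x y Cxy; case: (ltgtP x y) => [ltxy|ltyx|eqxy].
- have : y / (y - x) <= sup S by apply: S_le_sup; right; exists x, y.
  rewrite ler_pdivrMr ?subr_gt0 //; lra.
- have y_le0 : y <= 0 by have := C_avoids_quadrant Cxy; lra.
  have : sup S <= - y / (x - y).
    apply: ge_sup; first by exists 0.
    move=> _ [->|[p1 [p2 [Cp ltp ->]]]].
      by rewrite divr_ge0 // ?oppr_ge0 // subr_ge0 ltW.
    rewrite ler_pdivrMr ?subr_gt0 // mulrAC ler_pdivlMr ?subr_gt0 //.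
    have := diagonal_sides_cross_le Cp Cxy ltp ltyx; lra.
  rewrite ler_pdivlMr ?subr_gt0 //; lra.
- by have := C_avoids_quadrant Cxy; rewrite -eqxy; lra.
Qed.

End QuadrantSeparation.

Section PolicyMixture.
Context {R : realType} {A O : finType}.

Definition mix_policy (t : R) (m1 m2 : policy R A O) : policy R A O :=
  [seq (t * k.1, k.2) | k <- m1] ++ [seq ((1 - t) * k.1, k.2) | k <- m2].

Lemma valid_mix_policy t m1 m2 : 0 <= t <= 1 ->
  valid_policy m1 -> valid_policy m2 -> valid_policy (mix_policy t m1 m2).
Proof.
move=> /andP[t_ge0 t_le1] [valid1 sum1] [valid2 sum2]; split; last first.
  by rewrite big_cat !big_map /= -!mulr_sumr sum1 sum2 !mulr1 subrKC.
move=> i; rewrite size_cat !size_map nth_cat size_map => lt_i12.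
case: ltnP => [lt_i1|le1i].
  rewrite (nth_map (0, fun _ _ _ _ => 0)) //=.
  by have [w_ge0 valid_p] := valid1 i lt_i1; rewrite mulr_ge0.
have lt_i2 : (i - size m1 < size m2)%N by rewrite ltn_subLR.
rewrite (nth_map (0, fun _ _ _ _ => 0)) //=.
by have [w_ge0 valid_p] := valid2 _ lt_i2; rewrite mulr_ge0 // subr_ge0.
Qed.

Variables (n : nat) (D : pomdp R A O n).

Lemma trajPm_mix_policy t m1 m2 s o a :
  trajPm D (mix_policy t m1 m2) s o a =
  t * trajPm D m1 s o a + (1 - t) * trajPm D m2 s o a.
Proof.
rewrite /trajPm big_cat !big_map !mulr_sumr /=.
by apply: congr2; apply: eq_bigr => k _; rewrite -mulrA.
Qed.

Lemma EU_mix_policy t m1 m2 :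
  EU D (mix_policy t m1 m2) = t * EU D m1 + (1 - t) * EU D m2.
Proof.
rewrite /EU !mulr_sumr -big_split; apply: eq_bigr => s _.
rewrite /= !mulrA -mulrDl; congr (_ * _).
rewrite !mulr_sumr -big_split; apply: eq_bigr => o _.
rewrite !mulr_sumr -big_split; apply: eq_bigr => a _.
exact: trajPm_mix_policy.
Qed.

End PolicyMixture.

Definition stateP {R : realType} {A O : finType} {n : nat} (D : pomdp R A O n)
    (m : policy R A O) (s : n.-tuple (st D)) : R :=
  \sum_(o : n.-tuple O) \sum_(a : n.-tuple A) trajPm D m s o a.

Section StateEmbedding.
Context {R : realType} {A O : finType} {n : nat} (D D' : pomdp R A O n).
Variables (f : st D -> st D') (c : R).
(* For n = 0 the initial distribution does not occur in trajP. *)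
Hypothesis n_gt0 : (0 < n)%N.
Hypothesis init_f : forall s, init D' (f s) = c * init D s.
Hypothesis trans_f : forall s a s', trans D' (f s) a (f s') = trans D s a s'.
Hypothesis obs_f : forall s, obs D' (f s) =1 obs D s.

Lemma trajP_map_tuple p s o a :
  trajP D' p (map_tuple f s) o a = c * trajP D p s o a.
Proof.
have first_step : (fun i : 'I_n => i == 0 :> nat) =1 pred1 (Ordinal n_gt0).
  by move=> i; rewrite /= -val_eqE.
rewrite /trajP !(big_pred1 _ first_step) tnth_map init_f -!mulrA.
congr (_ * (_ * (_ * _))).
  by apply: eq_bigr => i _; rewrite tnth_map obs_f.
by apply: eq_bigr => i _; apply: eq_bigr => j _; rewrite !tnth_map trans_f.
Qed.

Lemma stateP_map_tuple m s : stateP D' m (map_tuple f s) = c * stateP D m s.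
Proof.
rewrite /stateP mulr_sumr; apply: eq_bigr => o _.
rewrite mulr_sumr; apply: eq_bigr => a _.
rewrite /trajPm mulr_sumr; apply: eq_bigr => k _.
by rewrite trajP_map_tuple mulrCA.
Qed.

End StateEmbedding.

Lemma sum_mul_pushforward (R : comPzSemiRingType) (I J : finType)
    (g : J -> I) (X : I -> R) (u : J -> R) :
  \sum_i X i * (\sum_j if i == g j then u j else 0) = \sum_j X (g j) * u j.
Proof.
under eq_bigr do rewrite mulr_sumr.
rewrite exchange_big; apply: eq_bigr => j _.
under eq_bigr do rewrite (fun_if (fun x => X _ * x)) mulr0.
by rewrite -big_mkcond big_pred1_eq.
Qed.

Lemma EU_mixture (R : realType) (A O : finType) (n : nat) (w1 w2 : R)
    (D1 D2 : pomdp R A O n) (m : policy R A O) :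
  (0 < n)%N -> EU (mixture w1 w2 D1 D2) m = w1 * EU D1 m + w2 * EU D2 m.
Proof.
move=> n_gt0; rewrite /EU /=.
under eq_bigr do rewrite mulrDr.
rewrite big_split /= !sum_mul_pushforward !mulr_sumr.
congr (_ + _); apply: eq_bigr => s _; rewrite mulrA; congr (_ * _).
  exact: stateP_map_tuple.
exact: stateP_map_tuple.
Qed.

Theorem lemma2 (R : realType) (A O : finType) (n : nat)
    (D1 D2 : pomdp R A O n) (pi : policy R A O) :
  (0 < n)%N -> valid_pomdp D1 -> valid_pomdp D2 -> valid_policy pi ->
  (pareto_optimal D1 D2 pi <->
   exists w1 w2 : R, [/\ 0 <= w1, 0 <= w2, w1 + w2 = 1 &
                        optimal (mixture w1 w2 D1 D2) pi]).
Proof.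
move=> n_gt0 _ _ _; split=> [pareto | [w1 [w2 [w1_ge0 w2_ge0 w12 opt]]] m valid_m].
- pose gain x y := exists2 m, valid_policy m &
    x = EU D1 m - EU D1 pi /\ y = EU D2 m - EU D2 pi.
  have gain_convex x1 y1 x2 y2 (t : R) : gain x1 y1 -> gain x2 y2 -> 0 <= t <= 1 ->
      gain (t * x1 + (1 - t) * x2) (t * y1 + (1 - t) * y2).
    move=> [m1 valid1 [-> ->]] [m2 valid2 [-> ->]] t01.
    exists (mix_policy t m1 m2); first exact: valid_mix_policy.
    by rewrite !EU_mix_policy; split; ring.
  have gain_avoids_quadrant x y : gain x y -> x <= 0 \/ y <= 0.
    by move=> [m valid_m [-> ->]]; rewrite !subr_le0; exact: pareto.
  have [w /andP[w_ge0 w_le1] supports] :=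
    supporting_weight gain_convex gain_avoids_quadrant.
  exists w, (1 - w); split; rewrite ?subr_ge0 ?subrKC // => m valid_m.
  have := supports _ _ (ex_intro2 _ _ m valid_m (conj erefl erefl)).
  rewrite !EU_mixture //; lra.
- have := opt m valid_m; rewrite !EU_mixture //.
  exact: le_or_le_of_wsum_le.
Qed.
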